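(* For all integers $L\ge 0$ and $n\ge 1$, $$S_L(n+3,n)=\frac{n(n+1)(n+2)(n+3)}{3\cdot 2^4}\left[\frac{(n+3)!}{3}\right]^{L}\left(n^2\left(\frac{3}{8}\right)^{L}+n\left(\frac{1}{4^{L-1}}-\frac{3^{L+1}}{8^L}\right)+\frac{2+2\cdot 3^L}{8^L}-\frac{1}{4^{L-1}}\right).$$ In particular, $S_0(n+3,n)=\frac{1}{48}n^2(n+1)^2(n+2)(n+3)$.
   Context: For an integer $L\ge 0$ let ${}_0F_L(z)=\sum_{n=0}^{\infty}\frac{z^n}{(n!)^{L+1}}$. Define the numbers $S_L(n,l)$ ($n,l\ge 0$) by the formal power series identities $\frac{({}_0F_L(z)-1)^l}{l!}=\sum_{n\ge l}\frac{S_L(n,l)}{(n!)^{L+1}}z^n$ for each $l\ge 0$. In particular $S_0(n,l)$ are the Stirling numbers of the second kind. *)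

From HB Require Import structures.
From mathcomp Require Import all_boot all_order all_algebra.
Set Implicit Arguments. Unset Strict Implicit. Unset Printing Implicit Defensive.
Import Order.TTheory GRing.Theory Num.Theory.
Local Open Scope ring_scope.

(* Truncation of 0F_L(z) - 1 = sum_{k>=1} z^k/(k!)^(L+1) to degree <= N,
   as a polynomial with rational coefficients. *)
Definition F0Lm1_trunc (L N : nat) : {poly rat} :=
  \poly_(k < N.+1) (if k == 0%N then 0 else (((k`!) ^ (L.+1))%:R)^-1).

(* S_L(n,l): defined by ((0F_L(z)-1)^l / l!) = sum_n S_L(n,l)/(n!)^(L+1) z^n.
   The coefficient of z^n of the power series (0F_L - 1)^l only depends on the
   terms of degree <= n of 0F_L - 1, hence equals the n-th coefficient of the
   l-th power of the truncation. *)
Definition S_L (L n l : nat) : rat :=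
  (((n`!) ^ (L.+1))%:R) * ((l`!)%:R)^-1 * ((F0Lm1_trunc L n) ^+ l)`_n.

From HB Require Import structures.
From mathcomp Require Import all_boot all_order all_algebra ring zify.
Set Implicit Arguments. Unset Strict Implicit. Unset Printing Implicit Defensive.
Import Order.TTheory GRing.Theory Num.Theory.
Local Open Scope ring_scope.

(* Since 0F_L(z) - 1 = z Q(z) with Q(0) = 1, the coefficient of z^(n+3) in
   (0F_L(z) - 1)^n is the coefficient of z^3 in Q(z)^n.  Expanding the n-th
   power, it is n c_4 + n(n-1) c_2 c_3 + C(n,3) c_2^3 with c_k = 1/(k!)^(L+1),
   the three terms coming from the compositions 3 = 3 = 1 + 2 = 1 + 1 + 1;
   the closed form is then a matter of rational algebra. *)

Lemma coef_exp_lt4 (R : comNzRingType) (q : {poly R}) (n : nat) : q`_0 = 1 ->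
  [/\ (q ^+ n)`_0 = 1, (q ^+ n)`_1 = q`_1 *+ n,
      (q ^+ n)`_2 = q`_2 *+ n + q`_1 ^+ 2 *+ 'C(n, 2)
    & (q ^+ n)`_3 = q`_3 *+ n + (q`_1 * q`_2) *+ 'C(n, 2).*2
                    + q`_1 ^+ 3 *+ 'C(n, 3)].
Proof.
move=> q0; elim: n => [|n [p0 p1 p2 p3]].
- by rewrite expr0 !coefC /= !bin0n /= !mulr0n !addr0.
- rewrite exprSr !coefM !big_ord_recr !big_ord0 /= !subn0 q0 p0 p1 p2 p3 /=.
  rewrite !binS bin1 !doubleD -!addnn !mulrnDr !mulrSr.
  split; ring.
Qed.

Lemma natr_bin2 (R : comPzRingType) (n : nat) :
  'C(n, 2)%:R *+ 2 = n%:R * (n%:R - 1) :> R.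
Proof.
elim: n => [|n IHn]; first by rewrite bin0n /= mul0rn mul0r.
by rewrite binS bin1 natrD mulrnDl IHn -[n.+1]addn1 natrD; ring.
Qed.

Lemma natr_bin3 (R : comPzRingType) (n : nat) :
  'C(n, 3)%:R *+ 6 = n%:R * (n%:R - 1) * (n%:R - 2) :> R.
Proof.
elim: n => [|n IHn]; first by rewrite bin0n /= mul0rn !mul0r.
rewrite binS natrD mulrnDl IHn (mulrnA _ 2 3) natr_bin2.
by rewrite -[n.+1]addn1 natrD; ring.
Qed.

Definition F0L_coef (L k : nat) : rat := ((k`! ^ L.+1)%:R)^-1.

Lemma F0Lm1_truncE (L N : nat) :
  F0Lm1_trunc L N = \poly_(k < N) F0L_coef L k.+1 * 'X.
Proof. by apply/polyP => -[|k]; rewrite coefMX !coef_poly. Qed.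

Lemma S_L_addn (L l k : nat) :
  S_L L (l + k) l = ((l + k)`! ^ L.+1)%:R / (l`!)%:R *
    ((\poly_(i < l + k) F0L_coef L i.+1) ^+ l)`_k.
Proof. by rewrite /S_L F0Lm1_truncE exprMn coefMXn ltnNge leq_addr addKn. Qed.

Lemma S_L_addn3 (L n : nat) : (0 < n)%N ->
  let c := F0L_coef L in
  S_L L (n + 3) n = ((n + 3)`! ^ L.+1)%:R / (n`!)%:R *
    (c 4%N *+ n + (c 2%N * c 3%N) *+ 'C(n, 2).*2 + c 2%N ^+ 3 *+ 'C(n, 3)).
Proof.
move=> n_gt0 c; rewrite S_L_addn.
set q := \poly_(i < n + 3) c i.+1.
have q_low j : (j < 4)%N -> q`_j = c j.+1.
  by move=> j_lt4; rewrite coef_poly ifT //; lia.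
have q0 : q`_0 = 1 by rewrite q_low // /c /F0L_coef exp1n invr1.
by have [_ _ _ ->] := coef_exp_lt4 n q0; rewrite !q_low.
Qed.

Lemma fact_addn3 (n : nat) :
  (n + 3)`! = (n`! * ((n + 1) * (n + 2) * (n + 3)))%N.
Proof. by rewrite addn3 !factS -addn3 -addn2 -addn1; ring. Qed.

Lemma S_L_addn3_closed (L n : nat) : (0 < n)%N ->
  S_L L (n + 3) n =
    ((n * (n + 1) * (n + 2) * (n + 3))%N%:R / (3 * 2 ^+ 4)) *
    (((n + 3)`!)%:R / 3) ^+ L *
    ((n%:R) ^+ 2 * (3 / 8) ^+ L
     + n%:R * (1 / (4 : rat) ^ (L%:Z - 1) - 3 ^+ L.+1 / 8 ^+ L)
     + (2 + 2 * 3 ^+ L) / 8 ^+ L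
     - 1 / (4 : rat) ^ (L%:Z - 1)).
Proof.
move=> n_gt0; rewrite S_L_addn3 //.
have bin2E : ('C(n, 2).*2)%:R = n%:R * (n%:R - 1) :> rat.
  by rewrite -muln2 natrM mulr_natr natr_bin2.
have bin3E : 'C(n, 3)%:R = n%:R * (n%:R - 1) * (n%:R - 2) / 6 :> rat.
  by rewrite -(natr_bin3 rat) -[_ *+ 6]mulr_natr mulfK.
have coefE k : F0L_coef L k = (k`!%:R ^+ L.+1)^-1 by rewrite /F0L_coef natrX.
rewrite -[_ *+ n]mulr_natr -[_ *+ 'C(n, 2).*2]mulr_natr.
rewrite -[_ *+ 'C(n, 3)]mulr_natr bin2E bin3E !coefE.
have -> : (2`!)%:R = 2 :> rat by [].
have -> : (3`!)%:R = 2 * 3 :> rat by [].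
have -> : (4`!)%:R = 2 ^+ 3 * 3 :> rat by [].
have -> : (4 : rat) = 2 ^+ 2 by [].
have -> : (8 : rat) = 2 ^+ 3 by [].
rewrite expfzDr // exprN1 -exprnP natrX exprS.
rewrite !exprMn !exprVn !(exprAC _ _ L) !exprS.
set F := (n + 3)`!%:R ^+ L.
rewrite fact_addn3 !natrM !natrD.
have nf_neq0 : n`!%:R != 0 :> rat by rewrite pnatr_eq0 -lt0n fact_gt0.
have t2_neq0 : (2 : rat) ^+ L != 0 by rewrite expf_neq0.
have t3_neq0 : (3 : rat) ^+ L != 0 by rewrite expf_neq0.
by field; rewrite nf_neq0 t2_neq0 t3_neq0.
Qed.

Theorem mainTheorem6 (L n : nat) (hn : (1 <= n)%N) :
  S_L L (n + 3) n =
    ((n * (n + 1) * (n + 2) * (n + 3))%N%:R / (3 * 2 ^+ 4)) *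
    (((n + 3)`!)%:R / 3) ^+ L *
    ((n%:R) ^+ 2 * (3 / 8) ^+ L
     + n%:R * (1 / (4 : rat) ^ (L%:Z - 1) - 3 ^+ L.+1 / 8 ^+ L)
     + (2 + 2 * 3 ^+ L) / 8 ^+ L
     - 1 / (4 : rat) ^ (L%:Z - 1))
  /\
  S_L 0 (n + 3) n =
    1 / 48 * (n%:R) ^+ 2 * (n.+1%:R) ^+ 2 * (n.+2)%:R * (n.+3)%:R.
Proof.
split; first exact: S_L_addn3_closed.
rewrite S_L_addn3_closed // !expr0 mulr1 sub0r exprN1.
rewrite -[n.+3]addn3 -[n.+2]addn2 -[n.+1]addn1 !natrM !natrD.
by field.
Qed.
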